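(* Let $K,L$ be Henselian valued fields of characteristic zero such that $K$ is an $\mathcal{L}_{\mathrm{val}}$-substructure of $L$, i.e. $K$ is a subfield of $L$ and $\mathcal{O}_K=K\cap\mathcal{O}_L$. Then for every positive integer $N$ the inclusion $K\hookrightarrow L$ induces an injective map $\mathrm{RV}_{N,K}\hookrightarrow\mathrm{RV}_{N,L}$, and with these identifications $K$ (with its natural $\mathcal{L}_{\mathrm{RV}}$-structure) is an $\mathcal{L}_{\mathrm{RV}}$-substructure of $L$.
   Context: For a valued field $K$ with valuation ring $\mathcal{O}_K$, maximal ideal $\mathcal{M}_K$, valuation $\mathrm{ord}$, and $N\ge1$: $\mathrm{RV}_{N,K}=K^\times/(1+N\mathcal{M}_K)\cup\{0\}$, $\mathrm{rv}_N\colon K\to\mathrm{RV}_{N,K}$ the projection with $\mathrm{rv}_N(0)=0$, and $\mathrm{rv}_{N,M}\colon\mathrm{RV}_{M,K}\to\mathrm{RV}_{N,K}$ the induced maps for $N\mid M$. The language $\mathcal{L}_{\mathrm{val}}=\{0,1,+,-,\cdot,\mathcal{O}\}$ with $\mathcal{O}$ interpreted as $\mathcal{O}_K$. The multisorted language $\mathcal{L}_{\mathrm{RV}}$ (sorts $\mathrm{VF}$, $\mathrm{RV}_N$) consists of the ring language on $\mathrm{VF}$; on each $\mathrm{RV}_N$: constants $0$ and $1=\mathrm{rv}_N(1)$, multiplication (group multiplication of $K^\times/(1+N\mathcal{M}_K)$ extended by $0$), the binary relation $\mathrm{rv}_N(x)\mid\mathrm{rv}_N(y)\Leftrightarrow\mathrm{ord}\,x\le\mathrm{ord}\,y$,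 the ternary relation $\oplus(\xi_1,\xi_2,\xi_3)$ meaning there exist $x_i\in K$ with $\mathrm{rv}_N(x_i)=\xi_i$ and $x_1+x_2=x_3$; the maps $\mathrm{rv}_N$, $\mathrm{rv}_{N,M}$; and relations $P_{N,d}\subseteq\mathrm{RV}_N\times\mathrm{RV}_{N^2}^{d+1}$ where $P_{N,d}(\xi,\zeta_0,\dots,\zeta_d)$ holds iff $\xi\in\mathrm{RV}_N^\times$ and, for some (equivalently all) $a_i\in K$ with $\mathrm{rv}_{N^2}(a_i)=\zeta_i$: (i) every element of $\{\mathrm{rv}_N(\sum_{i=1}^d y_i)\mid y_i\in K,\ \mathrm{rv}_N(y_i)=\mathrm{rv}_N(ia_i)\xi^{i-1}\}$ has order $\le\min_{1\le i\le d}\mathrm{ord}(a_i\xi^{i-1})+\mathrm{ord}\,N$, and (ii) there is $\tilde\xi\in\mathrm{RV}_{N^2}$ with $\mathrm{rv}_N(\tilde\xi)=\xi$ and $\sum_{i=0}^d y_i=0$ for some $y_i\in K$ with $\mathrm{rv}_{N^2}(y_i)=\mathrm{rv}_{N^2}(a_i)\tilde\xi^i$. *)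

From HB Require Import structures.
From mathcomp Require Import all_boot all_order all_algebra.
Set Implicit Arguments. Unset Strict Implicit. Unset Printing Implicit Defensive.
Import Order.TTheory GRing.Theory Num.Theory.
Local Open Scope ring_scope.

Section Defs.
Variable K : fieldType.
Variable O : {pred K}.

Definition valuation_ring : Prop :=
  [/\ 1 \in O,
      (forall x y, x \in O -> y \in O -> x - y \in O),
      (forall x y, x \in O -> y \in O -> x * y \in O) &
      (forall x, x != 0 -> (x \in O) || (x^-1 \in O))].

Definition maxI : pred K := fun x => (x \in O) && ~~ ((x != 0) && (x^-1 \in O)).

Definition henselian : Prop :=
  forall p : {poly K}, p \is monic -> (forall i, p`_i \in O) ->
  forall a, a \in O -> p.[a] \in maxI -> p^`().[a] \notin maxI ->
  exists2 b, b \in O & p.[b] = 0 /\ b - a \in maxI.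

Definition henselian_valued_field : Prop := valuation_ring /\ henselian.

(* ord x <= ord y  (with ord 0 = +oo) *)
Definition val_le (x y : K) : Prop := exists2 o, o \in O & y = o * x.

(* rv_N x : the class of x in RV_N = K^x/(1 + N M_K) u {0}, as a subset of K:
   the coset x (1 + N M_K)  (which is {0} for x = 0). *)
Definition rv (N : nat) (x : K) : K -> Prop :=
  fun y => exists2 m, m \in maxI & y = x * (1 + N%:R * m).

Definition rvmul (N : nat) (xi eta : K -> Prop) : K -> Prop :=
  fun z => exists x y, [/\ xi = rv N x, eta = rv N y & rv N (x * y) z].

Definition rvdiv (N : nat) (xi eta : K -> Prop) : Prop :=
  exists x y, [/\ xi = rv N x, eta = rv N y & val_le x y].

Definition oplus (N : nat) (xi1 xi2 xi3 : K -> Prop) : Prop :=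
  exists y1 y2 y3, [/\ rv N y1 = xi1, rv N y2 = xi2, rv N y3 = xi3 & y1 + y2 = y3].

Definition rvNM (N M : nat) (xi : K -> Prop) : K -> Prop :=
  fun z => exists x, xi = rv M x /\ rv N x z.

(* P_{N,d}(xi, zeta_0, ..., zeta_d), xi in RV_N, zeta_i in RV_{N^2}
   (only the indices i <= d of zeta matter). The element xi is handled
   through a representative x, so that rv_N(i a_i) xi^(i-1) = rv_N(i a_i x^(i-1))
   and ord(a_i xi^(i-1)) = ord(a_i x^(i-1)). *)
Definition Prel (N d : nat) (xi : K -> Prop) (zeta : nat -> K -> Prop) : Prop :=
  exists (x : K) (a : nat -> K),
  [/\ xi = rv N x, x != 0,
      (forall i, (i <= d)%N -> zeta i = rv (N * N)%N (a i)),
      (forall y : nat -> K,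
         (forall i, (1 <= i <= d)%N -> rv N (y i) = rv N (i%:R * a i * x ^+ i.-1)) ->
         forall i, (1 <= i <= d)%N ->
           val_le (\sum_(1 <= j < d.+1) y j) (N%:R * (a i * x ^+ i.-1)))
    &
      (exists xt : K, rv N xt = rv N x /\
         exists y : nat -> K,
           (forall i, (i <= d)%N -> rv (N * N)%N (y i) = rv (N * N)%N (a i * xt ^+ i)) /\
           \sum_(0 <= i < d.+1) y i = 0)].

End Defs.

(* The inclusion iota : K -> L induces the map RV_{N,K} -> RV_{N,L},
   rv_N(x) |-> rv_N(iota x); clause (1) says it is well defined and injective;
   the remaining clauses say that, under this identification, every symbol of
   L_RV involving the sort RV_N is preserved and reflected (function symbols via
   their graphs).  Constants 0 = rv_N 0, 1 = rv_N 1 and the map rv_N are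
   preserved by construction of the map. *)
Definition LRV_substructure (K L : fieldType) (OK : {pred K}) (OL : {pred L})
  (iota : {rmorphism K -> L}) (N : nat) : Prop :=
  [/\
      (forall x y : K, rv OK N x = rv OK N y <-> rv OL N (iota x) = rv OL N (iota y)),
      (forall x y z : K, rvmul OK N (rv OK N x) (rv OK N y) = rv OK N z <->
                         rvmul OL N (rv OL N (iota x)) (rv OL N (iota y)) = rv OL N (iota z)),
      (forall x y : K, rvdiv OK N (rv OK N x) (rv OK N y) <->
                       rvdiv OL N (rv OL N (iota x)) (rv OL N (iota y))),
      (forall x1 x2 x3 : K, oplus OK N (rv OK N x1) (rv OK N x2) (rv OK N x3) <->
         oplus OL N (rv OL N (iota x1)) (rv OL N (iota x2)) (rv OL N (iota x3))) &
      ((forall M : nat, (0 < M)%N -> (N %| M)%N -> forall x y : K,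
         rvNM OK N M (rv OK M x) = rv OK N y <->
         rvNM OL N M (rv OL M (iota x)) = rv OL N (iota y)) /\
      (forall (d : nat) (x : K) (a : nat -> K),
         Prel OK N d (rv OK N x) (fun i => rv OK (N * N)%N (a i)) <->
         Prel OL N d (rv OL N (iota x)) (fun i => rv OL (N * N)%N (iota (a i)))))].

(* rv_N u = rv_N v means ord (v - u) > ord (N u), so every symbol of L_RV translates
   into valuation inequalities between elements of K, which the embedding preserves and,
   since O_K = K ∩ O_L, also reflects.  The exception is condition (ii) of P_{N,d}, which
   asks for an approximate root near x.  There one fixes the index k minimising
   ord (a_k x^k), so that, with f = sum_i a_i X^i and G = x f'(x), Taylor expansion gives
   f (x (1 + N mu)) = f x + N mu G modulo N^2 mu^2 a_k x^k O; a root near x in L therefore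
   yields f x + N mu G small, and either x or a Newton step from x is an approximate root
   in K. *)

From HB Require Import structures.
From mathcomp Require Import all_boot all_order all_algebra.
From mathcomp Require Import ring.
From Stdlib Require Import Setoid FunctionalExtensionality PropExtensionality.
Set Implicit Arguments. Unset Strict Implicit. Unset Printing Implicit Defensive.
Import GRing.Theory.
Local Open Scope ring_scope.

Section ValuationRing.
Variables (F : fieldType) (O : {pred F}).
Hypothesis hO : valuation_ring O.

Lemma valuation_subring_closed : subring_closed O.
Proof. by case: hO. Qed.
HB.instance Definition _ := GRing.isSubringClosed.Build F O valuation_subring_closed.

Lemma valuation_total x : x != 0 -> (x \in O) || (x^-1 \in O).
Proof. by case: hO => _ _ _; apply. Qed.

Local Notation M := (maxI O).
Local Notation vle := (val_le O).

Lemma maxIP x : reflect (x \in O /\ (x != 0 -> x^-1 \notin O)) (x \in M).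
Proof.
apply: (iffP andP) => -[xO h]; split=> //; first by move=> x0; rewrite x0 in h.
by apply/negP => /andP[x0]; apply/negP; exact: h.
Qed.

Lemma maxI_valr m : m \in M -> m \in O.
Proof. by case/maxIP. Qed.

Lemma maxI_mull o m : o \in O -> m \in M -> o * m \in M.
Proof.
move=> oO /maxIP[mO minv]; apply/maxIP; split; first exact: rpredM.
rewrite mulf_eq0 negb_or => /andP[o0 m0]; apply: contra (minv m0) => omV.
by rewrite -[m^-1](mulVKf o0) -invfM rpredM.
Qed.

Lemma maxI_mulr m o : m \in M -> o \in O -> m * o \in M.
Proof. by move=> mM oO; rewrite mulrC maxI_mull. Qed.

Lemma maxI_zmod_closed : zmod_closed M.
Proof.
split=> [|x y /maxIP[xO xV] /maxIP[yO yV]]; first by apply/maxIP; rewrite rpred0 eqxx.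
apply/maxIP; split=> [|xy0]; first exact: rpredB.
apply/negP => xyV.
have [y0|y0] := eqVneq y 0; first by move: xy0 xyV; rewrite y0 subr0 => /xV/negP.
have [x0|x0] := eqVneq x 0.
  by move: xyV; rewrite x0 sub0r invrN rpredN; apply/negP/yV.
case/orP: (valuation_total (mulf_neq0 x0 (invr_neq0 y0))) => [xyO|].
  have yVE : y^-1 = (x - y)^-1 * (x / y - 1) by field; rewrite y0 xy0.
  by move/negP: (yV y0); rewrite yVE rpredM ?rpredB ?rpred1.
rewrite invfM invrK mulrC => yxO.
have xVE : x^-1 = (x - y)^-1 * (1 - y / x) by field; rewrite x0 xy0.
by move/negP: (xV x0); rewrite xVE rpredM ?rpredB ?rpred1.
Qed.
HB.instance Definition _ := GRing.isZmodClosed.Build F M maxI_zmod_closed.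

Lemma maxI1 : 1 \notin M.
Proof. by apply/maxIP => -[_ /(_ (oner_neq0 _))]; rewrite invr1 rpred1. Qed.

Lemma maxI_unit1D m : m \in M -> 1 + m != 0 /\ (1 + m)^-1 \in O.
Proof.
move=> mM; split.
  by apply: contraNneq maxI1 => m1; rewrite -[1](addrK m) m1 sub0r rpredN.
apply/negPn/negP => m1V; apply: (negP maxI1).
have m1M : 1 + m \in M.
  by apply/maxIP; split=> [|//]; rewrite rpredD ?rpred1 ?maxI_valr.
by rewrite -[1](addrK m) rpredB.
Qed.

Lemma val_le_refl x : vle x x.
Proof. by exists 1; rewrite ?rpred1 ?mul1r. Qed.

Lemma val_le_trans x y z : vle x y -> vle y z -> vle x z.
Proof. by move=> [o oO ->] [o' o'O ->]; exists (o' * o); rewrite ?rpredM ?mulrA. Qed.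

Lemma val_le_total x y : vle x y \/ vle y x.
Proof.
have [->|x0] := eqVneq x 0; first by right; exists 0; rewrite ?rpred0 ?mul0r.
have [->|y0] := eqVneq y 0; first by left; exists 0; rewrite ?rpred0 ?mul0r.
case/orP: (valuation_total (mulf_neq0 y0 (invr_neq0 x0))) => [yxO|].
  by left; exists (y / x); rewrite ?divfK.
by rewrite invfM invrK mulrC => xyO; right; exists (x / y); rewrite ?divfK.
Qed.

Lemma val_leM2l c x y : vle x y -> vle (c * x) (c * y).
Proof. by case=> o oO ->; exists o; rewrite // mulrCA. Qed.

Lemma val_le_mull o x y : o \in O -> vle x y -> vle x (o * y).
Proof. by move=> oO [o' o'O ->]; exists (o * o'); rewrite ?rpredM ?mulrA. Qed.

Lemma exists_val_min (I : eqType) (s : seq I) (b : I -> F) :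
  s != [::] -> exists2 k, k \in s & forall i, i \in s -> vle (b k) (b i).
Proof.
elim: s => [//|j [_ _|i s IH _]].
  by exists j => [|i]; rewrite ?inE // => /eqP->; apply: val_le_refl.
have [k ks kmin] := IH isT.
have [jk|kj] := val_le_total (b j) (b k).
  exists j => [|l]; rewrite ?inE ?eqxx // => /orP[/eqP->|ls]; first exact: val_le_refl.
  exact: val_le_trans jk (kmin l ls).
exists k => [|l]; rewrite inE ?ks ?orbT // => /orP[/eqP->|]; [exact: kj | exact: kmin].
Qed.

(* ord x < ord y, with ord 0 = +oo; in particular val_lt x 0 holds for every x. *)
Definition val_lt x y := exists2 m, m \in M & y = m * x.

Lemma val_le_lt_trans x y z : vle x y -> val_lt y z -> val_lt x z.
Proof. by move=> [o oO ->] [m mM ->]; exists (m * o); rewrite ?maxI_mulr ?mulrA. Qed.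

Lemma val_lt_le_trans x y z : val_lt x y -> vle y z -> val_lt x z.
Proof. by move=> [m mM ->] [o oO ->]; exists (o * m); rewrite ?maxI_mull ?mulrA. Qed.

Lemma val_lt_maxI m x : m \in M -> val_lt x (m * x).
Proof. by exists m. Qed.

Lemma val_ltB c x y : val_lt c x -> val_lt c y -> val_lt c (x - y).
Proof. by move=> [m mM ->] [m' m'M ->]; exists (m - m'); rewrite ?rpredB ?mulrBl. Qed.

Lemma val_ltN c x : val_lt c x -> val_lt c (- x).
Proof. by case=> m mM ->; exists (- m); rewrite ?rpredN ?mulNr. Qed.

Lemma val_lt_sub_ge c y : val_lt c (y - c) -> vle y c.
Proof.
case=> m mM e; have [m1 m1V] := maxI_unit1D mM; exists (1 + m)^-1 => //.
by rewrite -(subrK c y) e (_ : m * c + c = (1 + m) * c) ?mulKf //; ring.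
Qed.

Lemma big_factor (S : addrClosed F) (I : Type) (r : seq I) (P : pred I)
    (G : I -> F) c :
  (forall i, P i -> exists2 s, s \in S & G i = s * c) ->
  exists2 s, s \in S & \sum_(i <- r | P i) G i = s * c.
Proof.
move=> h; apply: (big_ind (fun z => exists2 s, s \in S & z = s * c)) => //.
  by exists 0; rewrite ?rpred0 ?mul0r.
by move=> _ _ [s sS ->] [s' s'S ->]; exists (s + s'); rewrite ?rpredD ?mulrDl.
Qed.

Lemma val_le_sum (I : Type) (r : seq I) (P : pred I) (G : I -> F) c :
  (forall i, P i -> vle c (G i)) -> vle c (\sum_(i <- r | P i) G i).
Proof. exact: big_factor. Qed.

Lemma val_lt_sum (I : Type) (r : seq I) (P : pred I) (G : I -> F) c :
  (forall i, P i -> val_lt c (G i)) -> val_lt c (\sum_(i <- r | P i) G i).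
Proof. exact: big_factor. Qed.

Lemma fun_prop_ext (A B : F -> Prop) : (forall z, A z <-> B z) -> A = B.
Proof.
by move=> AB; apply: functional_extensionality => z; apply: propositional_extensionality.
Qed.

Lemma rv_refl N u : rv O N u u.
Proof. by exists 0; rewrite ?rpred0 // mulr0 addr0 mulr1. Qed.

Lemma natr_maxI N m : m \in M -> N%:R * m \in M.
Proof. by move=> mM; rewrite maxI_mull ?rpred_nat. Qed.

Lemma rv_mul1D N u m : m \in M -> rv O N (u * (1 + N%:R * m)) = rv O N u.
Proof.
move=> mM; have [m1 m1V] := maxI_unit1D (natr_maxI N mM).
apply: fun_prop_ext => z; split=> -[m' m'M ->].
  exists (m + m' + N%:R * m * m'); last by ring.
  by rewrite !rpredD // maxI_mulr ?natr_maxI ?maxI_valr.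
exists ((m' - m) * (1 + N%:R * m)^-1); first by rewrite maxI_mulr ?rpredB.
by field.
Qed.

Lemma rv_eqP N u v :
  rv O N u = rv O N v <-> exists2 m, m \in M & v = u * (1 + N%:R * m).
Proof.
split=> [uv|[m mM ->]]; last by rewrite rv_mul1D.
by have := rv_refl N v; rewrite -uv.
Qed.

Lemma rv_eq_val_lt N u v : rv O N u = rv O N v <-> val_lt (N%:R * u) (v - u).
Proof.
rewrite rv_eqP; split=> -[m mM e]; exists m => //; first by rewrite e; ring.
by rewrite -(subrK u v) e; ring.
Qed.

Lemma rv_mulr N u v z : rv O N u = rv O N v -> rv O N (u * z) = rv O N (v * z).
Proof. by case/rv_eqP=> m mM ->; rewrite mulrAC rv_mul1D. Qed.

Lemma rvM N u u' v v' : rv O N u = rv O N u' -> rv O N v = rv O N v' ->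
  rv O N (u * v) = rv O N (u' * v').
Proof. by move=> uu' vv'; rewrite (rv_mulr v uu') mulrC (rv_mulr u' vv') mulrC. Qed.

Lemma rvX N u v k : rv O N u = rv O N v -> rv O N (u ^+ k) = rv O N (v ^+ k).
Proof. by move=> uv; elim: k => [|k IH]; rewrite ?expr0 // !exprS (rvM uv IH). Qed.

Lemma rv_dvdn N N' u v : (N %| N')%N -> rv O N' u = rv O N' v -> rv O N u = rv O N v.
Proof.
case/dvdnP=> k -> /rv_eqP[m mM ->]; apply/rv_eqP.
by exists (k%:R * m); rewrite ?natr_maxI // natrM; ring.
Qed.

Lemma rv_eq_val_le N u v : rv O N u = rv O N v -> vle u v.
Proof.
case/rv_eqP=> m mM ->; exists (1 + N%:R * m); last by rewrite mulrC.
by rewrite rpredD ?rpred1 ?maxI_valr ?natr_maxI.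
Qed.

Lemma rv_val_le N u u' v v' : rv O N u = rv O N u' -> rv O N v = rv O N v' ->
  vle u v -> vle u' v'.
Proof.
move=> uu' vv' uv; apply: val_le_trans (rv_eq_val_le (esym uu')) _.
exact: val_le_trans uv (rv_eq_val_le vv').
Qed.

Lemma rv_val_lt N u u' v : rv O N u = rv O N u' -> val_lt u v -> val_lt u' v.
Proof. by move=> uu'; apply: val_le_lt_trans (rv_eq_val_le (esym uu')). Qed.

Lemma rvmul_rv N x y : rvmul O N (rv O N x) (rv O N y) = rv O N (x * y).
Proof.
apply: fun_prop_ext => z; split=> [[x' [y' [xx' yy']]]|xyz]; last by exists x, y.
by rewrite (rvM xx' yy').
Qed.

Lemma rvdiv_rv N x y : rvdiv O N (rv O N x) (rv O N y) <-> vle x y.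
Proof.
split=> [[x' [y' [xx' yy']]]|]; last by exists x, y.
exact: rv_val_le (esym xx') (esym yy').
Qed.

Lemma rvNM_rv N N' x : (N %| N')%N -> rvNM O N N' (rv O N' x) = rv O N x.
Proof.
move=> NN'; apply: fun_prop_ext => z; split=> [[x' [xx']]|xz]; last by exists x.
by rewrite (rv_dvdn NN' xx').
Qed.

Lemma oplus_rvE N x1 x2 x3 w : w \in [:: x1; x2; x3] ->
    (forall x, x \in [:: x1; x2; x3] -> vle w x) ->
  oplus O N (rv O N x1) (rv O N x2) (rv O N x3) <-> val_lt (N%:R * w) (x1 + x2 - x3).
Proof.
move=> ws wmin.
have lt_w x y : x \in [:: x1; x2; x3] ->
    val_lt (N%:R * x) (y - x) -> val_lt (N%:R * w) (y - x).
  by move=> xs; apply/val_le_lt_trans/val_leM2l/wmin.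
split=> [[y1 [y2 [y3 [/esym/rv_eq_val_lt e1 /esym/rv_eq_val_lt e2 /esym/rv_eq_val_lt e3 s]]]]|].
  have -> : x1 + x2 - x3 = (y3 - x3) - (y1 - x1) - (y2 - x2).
    by rewrite -s; ring.
  by apply: val_ltB; [apply: val_ltB|]; apply: lt_w; rewrite ?inE ?eqxx ?orbT.
move: ws; rewrite !inE => /or3P[]/eqP-> ws.
- exists (x1 - (x1 + x2 - x3)), x2, x3; split=> //; last by ring.
  by apply/esym/rv_eq_val_lt; rewrite addrC addKr; apply: val_ltN.
- exists x1, (x2 - (x1 + x2 - x3)), x3; split=> //; last by ring.
  by apply/esym/rv_eq_val_lt; rewrite addrC addKr; apply: val_ltN.
- exists x1, x2, (x3 + (x1 + x2 - x3)); split=> //; last by ring.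
  by apply/esym/rv_eq_val_lt; rewrite (addrC x3) addrK.
Qed.

Lemma sum_rv_sub N c (y z : nat -> F) m n :
    (forall j, (m <= j < n)%N -> rv O N (y j) = rv O N (z j)) ->
    (forall j, (m <= j < n)%N -> vle c (N%:R * z j)) ->
  val_lt c (\sum_(m <= j < n) y j - \sum_(m <= j < n) z j).
Proof.
move=> yz cz; rewrite -sumrB big_nat_cond; apply: val_lt_sum => j /andP[jmn _].
exact/(val_le_lt_trans (cz j jmn))/rv_eq_val_lt/esym/yz.
Qed.

Definition peval (a : nat -> F) d x := \sum_(0 <= i < d.+1) a i * x ^+ i.

Definition pderiv_eval (a : nat -> F) d x := \sum_(1 <= j < d.+1) j%:R * a j * x ^+ j.-1.

Definition Prel_deriv N d x a :=
  forall i, (1 <= i <= d)%N -> vle (pderiv_eval a d x) (N%:R * (a i * x ^+ i.-1)).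

Definition Prel_root N d x (a : nat -> F) :=
  exists xt, rv O N xt = rv O N x /\
    exists y : nat -> F,
      (forall i, (i <= d)%N -> rv O (N * N)%N (y i) = rv O (N * N)%N (a i * xt ^+ i)) /\
      \sum_(0 <= i < d.+1) y i = 0.

Definition approx_root N d x a c := exists2 t, rv O N t = rv O N x & val_lt c (peval a d t).

Lemma PrelE N d x a :
  Prel O N d (rv O N x) (fun i => rv O (N * N)%N (a i)) <->
  [/\ x != 0, Prel_deriv N d x a & Prel_root N d x a].
Proof.
split=> [[x0 [a0 [xx0 x00 aa0 deriv0 [xt [xtx0 root0]]]]]|[x0 deriv root]].
  have aa0N i : (i <= d)%N -> rv O N (a i) = rv O N (a0 i).
    by move=> id; apply: rv_dvdn (aa0 i id); apply/dvdn_mull.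
  split.
  - by case/rv_eqP: xx0 => m _ e; apply: contraNneq x00 => x0E; rewrite e x0E mul0r.
  - move=> i /[dup] /andP[_ id] i1d.
    have termE j : (1 <= j <= d)%N ->
        rv O N (j%:R * a j * x ^+ j.-1) = rv O N (j%:R * a0 j * x0 ^+ j.-1).
      by case/andP=> _ jd; rewrite (rvM (rvM erefl (aa0N j jd)) (rvX _ xx0)).
    apply: (rv_val_le (N := N) erefl _ (deriv0 _ termE i i1d)).
    exact: esym (rvM erefl (rvM (aa0N i id) (rvX _ xx0))).
  - exists xt; split; first by rewrite xtx0 xx0.
    case: root0 => y [ya0 ysum]; exists y; split=> // i id.
    by rewrite ya0 // (rv_mulr _ (aa0 i id)).
exists x, a; split=> // y yterm i i1d.
have sum_eq : val_lt (pderiv_eval a d x) (\sum_(1 <= j < d.+1) y j - pderiv_eval a d x).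
  apply: (sum_rv_sub (N := N)) => j j1d; first exact: yterm.
  by rewrite -mulrA mulrCA; apply: val_le_mull; [exact: rpred_nat | exact: deriv].
exact: val_le_trans (val_lt_sub_ge sum_eq) (deriv i i1d).
Qed.

Lemma val_le_expr1D u i : u \in O -> vle (u ^+ 2) ((1 + u) ^+ i - 1 - i%:R * u).
Proof.
move=> uO; elim: i => [|i [o oO e]]; first by exists 0; rewrite ?rpred0 // expr0; ring.
exists ((1 + u) * o + i%:R); first by rewrite rpredD ?rpredM ?rpredD ?rpred1 ?rpred_nat.
have E : (1 + u) ^+ i = o * u ^+ 2 + 1 + i%:R * u by rewrite -e; ring.
by rewrite exprS E -natr1; ring.
Qed.

Lemma exists_min_term d x (a : nat -> F) :
  exists2 k, (k <= d)%N & forall i, (i <= d)%N -> vle (a k * x ^+ k) (a i * x ^+ i).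
Proof.
have [k] := exists_val_min (fun i => a i * x ^+ i) (isT : iota 0 d.+1 != [::]).
by rewrite mem_iota => kd kmin; exists k => // i id; apply: kmin; rewrite mem_iota.
Qed.

Section MinimalTerm.
Variables (d k : nat) (x : F) (a : nat -> F).
Hypotheses (kd : (k <= d)%N) (kmin : forall i, (i <= d)%N -> vle (a k * x ^+ k) (a i * x ^+ i)).

Lemma Prel_rootE N :
  Prel_root N d x a <-> approx_root N d x a ((N * N)%N%:R * (a k * x ^+ k)).
Proof.
have termE t : rv O N t = rv O N x -> forall i, rv O N (a i * t ^+ i) = rv O N (a i * x ^+ i).
  by move=> tx i; apply/(rvM erefl)/rvX.
split=> [[t [tx [y [yterm ysum]]]]|[t tx troot]].
  exists t => //; rewrite -[peval _ _ _]opprK; apply: val_ltN.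
  rewrite -[- _]sub0r -ysum; apply: (sum_rv_sub (N := (N * N)%N)) => i /andP[_ id].
    exact: yterm.
  apply/val_leM2l/(rv_val_le erefl (esym (termE t tx i)))/kmin.
  by rewrite -ltnS.
exists t; split=> //; pose f := peval a d t.
exists (fun i => a i * t ^+ i - (if i == k then f else 0)); split.
  move=> i id; case: eqP => [->|_]; last by rewrite subr0.
  apply/esym/rv_eq_val_lt; rewrite addrC addKr; apply: val_ltN.
  by apply: rv_val_lt troot; apply/(rvM erefl)/esym/termE.
by rewrite sumrB -big_mkcond big_nat1_eq /= ltnS kd subrr.
Qed.

Lemma peval_taylor u : u \in O ->
  vle (u ^+ 2 * (a k * x ^+ k))
      (peval a d (x * (1 + u)) - peval a d x - u * peval (fun i => i%:R * a i) d x).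
Proof.
move=> uO; rewrite /peval mulr_sumr -!sumrB big_nat_cond.
apply: val_le_sum => i /andP[/andP[_ id] _].
have [o oO e] := val_le_expr1D i uO; have [o' o'O e'] := kmin id.
exists (o * o'); first exact: rpredM.
have -> : a i * (x * (1 + u)) ^+ i - a i * x ^+ i - u * (i%:R * a i * x ^+ i) =
    ((1 + u) ^+ i - 1 - i%:R * u) * (a i * x ^+ i) by rewrite exprMn; ring.
by rewrite e e'; ring.
Qed.

Lemma approx_root_taylor N mu : mu \in M ->
  let c := (N * N)%N%:R * (a k * x ^+ k) in
  let G := peval (fun i => i%:R * a i) d x in
  val_lt c (peval a d (x * (1 + N%:R * mu))) <-> val_lt c (peval a d x + N%:R * mu * G).
Proof.
move=> muM c G; set T := peval a d _.
set D := T - peval a d x - N%:R * mu * G.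
have D_small : val_lt c D.
  apply: val_lt_le_trans (peval_taylor (maxI_valr (natr_maxI N muM))).
  rewrite (_ : _ ^+ 2 * _ = mu * mu * c); last by rewrite /c natrM; ring.
  exact/val_lt_maxI/maxI_mulr/maxI_valr.
rewrite (_ : _ + _ = T - D); last by rewrite /D; ring.
split=> [root|]; first exact: val_ltB root D_small.
by move/val_ltB/(_ (val_ltN D_small)); rewrite opprK subrK.
Qed.

End MinimalTerm.

End ValuationRing.

Section Transfer.
Variables (K L : fieldType) (OK : {pred K}) (OL : {pred L}) (iota : {rmorphism K -> L}).
Hypotheses (hOK : valuation_ring OK) (hOL : valuation_ring OL).
Hypothesis iotaO : forall x, (x \in OK) = (iota x \in OL).

Lemma iota_maxI x : (x \in maxI OK) = (iota x \in maxI OL).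
Proof.
rewrite -[_ \in maxI OK]/(_ && _) -[_ \in maxI OL]/(_ && _).
by rewrite -iotaO fmorph_eq0 -fmorphV -iotaO.
Qed.

Lemma iota_factor (S : {pred K}) (S' : {pred L}) :
    0 \in S -> (forall s, (s \in S) = (iota s \in S')) -> forall x y,
  (exists2 s, s \in S & y = s * x) <-> (exists2 s, s \in S' & iota y = s * iota x).
Proof.
move=> S0 SS' x y; split=> [[s sS ->]|[s sS' e]]; first by exists (iota s); rewrite -?SS' ?rmorphM.
have [x0|x0] := eqVneq x 0.
  exists 0 => //; rewrite x0 mulr0; apply: (fmorph_inj iota).
  by rewrite e x0 !rmorph0 mulr0.
exists (y / x); last by rewrite divfK.
by rewrite SS' fmorph_div e mulfK ?fmorph_eq0.
Qed.

Lemma val_le_iota x y : val_le OK x y <-> val_le OL (iota x) (iota y).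
Proof. exact: iota_factor (rpred0 _) iotaO x y. Qed.

Lemma val_lt_iota x y : val_lt OK x y <-> val_lt OL (iota x) (iota y).
Proof. exact: iota_factor (rpred0 _) iota_maxI x y. Qed.

Lemma rv_iota N u v : rv OK N u = rv OK N v <-> rv OL N (iota u) = rv OL N (iota v).
Proof. by rewrite (rv_eq_val_lt hOK) (rv_eq_val_lt hOL) val_lt_iota rmorphB rmorphM rmorph_nat. Qed.

Lemma rmorph_peval a d x : iota (peval a d x) = peval (fun i => iota (a i)) d (iota x).
Proof. by rewrite rmorph_sum; apply: eq_bigr => i _; rewrite rmorphM rmorphXn. Qed.

Lemma min_term_iota d k x a :
    (forall i, (i <= d)%N -> val_le OK (a k * x ^+ k) (a i * x ^+ i)) ->
  forall i, (i <= d)%N -> val_le OL (iota (a k) * iota x ^+ k) (iota (a i) * iota x ^+ i).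
Proof. by move=> kmin i id; rewrite -!rmorphXn -!rmorphM; apply/val_le_iota/kmin. Qed.

Lemma approx_root_iota N d x a k :
    (forall i, (i <= d)%N -> val_le OK (a k * x ^+ k) (a i * x ^+ i)) ->
  approx_root OK N d x a ((N * N)%N%:R * (a k * x ^+ k)) <->
  approx_root OL N d (iota x) (fun i => iota (a i)) ((N * N)%N%:R * (iota (a k) * iota x ^+ k)).
Proof.
move=> kmin; set c := (N * N)%N%:R * (a k * x ^+ k).
have cE : iota c = (N * N)%N%:R * (iota (a k) * iota x ^+ k).
  by rewrite !rmorphM rmorph_nat rmorphXn.
split=> [[t tx root]|[_ /esym/(rv_eqP hOL)[mu muM ->]]].
  by exists (iota t); [apply/rv_iota | rewrite -cE -rmorph_peval -val_lt_iota].
set F := peval a d x; set G := peval (fun i => i%:R * a i) d x.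
have iotaG : iota G = peval (fun i => i%:R * iota (a i)) d (iota x).
  by rewrite rmorph_peval; apply: eq_bigr => i _; rewrite rmorphM rmorph_nat.
move/(approx_root_taylor hOL (min_term_iota kmin) N muM).
rewrite -cE -iotaG -rmorph_peval -/F => near_root.
(* If ord G >= ord (N a_k x^k), x itself is an approximate root in K; otherwise
   ord f(x) > ord (N G) and the Newton step x (1 - N nu), nu = f(x) / N G, is one. *)
have [[o oO eG]|[o oO eG]] := val_le_total hOK (N%:R * (a k * x ^+ k)) G.
  exists x => //; apply/val_lt_iota.
  rewrite (_ : iota F = iota F + N%:R * mu * iota G - mu * iota o * iota c); last first.
    by rewrite eG /c natrM !rmorphM !rmorph_nat; ring.
  by apply: (val_ltB hOL near_root); apply: val_lt_maxI; rewrite maxI_mulr // -iotaO.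
have [nu nuM eF] : val_lt OK (N%:R * G) F.
  apply/val_lt_iota.
  rewrite (_ : iota F = iota F + N%:R * mu * iota G - mu * iota (N%:R * G)); last first.
    by rewrite rmorphM rmorph_nat; ring.
  apply: (val_ltB hOL); last exact: val_lt_maxI _ muM.
  apply: (val_le_lt_trans hOL _ near_root).
  by apply/val_le_iota; exists o => //; rewrite /c natrM -mulrA eG; ring.
have nuNM : - nu \in maxI OK by rewrite rpredN.
exists (x * (1 + N%:R * - nu)); first by rewrite rv_mul1D.
apply/(approx_root_taylor hOK kmin N nuNM); rewrite -/F -/G eF.
by exists 0; rewrite ?rpred0 // mul0r; ring.
Qed.

Lemma Prel_root_iota N d x a :
  Prel_root OK N d x a <-> Prel_root OL N d (iota x) (fun i => iota (a i)).
Proof.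
have [k kd kmin] := exists_min_term hOK d x a.
rewrite (Prel_rootE hOK kd kmin) (Prel_rootE hOL kd (min_term_iota kmin)).
exact: approx_root_iota.
Qed.

Lemma Prel_deriv_iota N d x a :
  Prel_deriv OK N d x a <-> Prel_deriv OL N d (iota x) (fun i => iota (a i)).
Proof.
have derivE : iota (pderiv_eval a d x) = pderiv_eval (fun i => iota (a i)) d (iota x).
  by rewrite rmorph_sum; apply: eq_bigr => j _; rewrite !rmorphM rmorph_nat rmorphXn.
have termE i : iota (N%:R * (a i * x ^+ i.-1)) = N%:R * (iota (a i) * iota x ^+ i.-1).
  by rewrite !rmorphM rmorph_nat rmorphXn.
split=> deriv i i1d; last by apply/val_le_iota; rewrite derivE termE; apply: deriv.
by rewrite -derivE -termE; apply/val_le_iota/deriv.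
Qed.

Lemma Prel_iota N d x a :
  Prel OK N d (rv OK N x) (fun i => rv OK (N * N)%N (a i)) <->
  Prel OL N d (rv OL N (iota x)) (fun i => rv OL (N * N)%N (iota (a i))).
Proof.
rewrite (PrelE hOK) (PrelE hOL) fmorph_eq0.
by split=> -[x0 /Prel_deriv_iota deriv /Prel_root_iota root].
Qed.

Lemma oplus_iota N x1 x2 x3 :
  oplus OK N (rv OK N x1) (rv OK N x2) (rv OK N x3) <->
  oplus OL N (rv OL N (iota x1)) (rv OL N (iota x2)) (rv OL N (iota x3)).
Proof.
have [w ws wmin] := exists_val_min hOK (fun y => y) (isT : [:: x1; x2; x3] != [::]).
have wsL : iota w \in [:: iota x1; iota x2; iota x3].
  by rewrite -[[:: _; _; _]]/(map iota [:: x1; x2; x3]) map_f.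
have wminL y : y \in [:: iota x1; iota x2; iota x3] -> val_le OL (iota w) y.
  by rewrite !inE => /or3P[]/eqP->; apply/val_le_iota/wmin; rewrite !inE eqxx ?orbT.
rewrite (oplus_rvE hOK N ws wmin) (oplus_rvE hOL N wsL wminL).
by rewrite val_lt_iota rmorphM rmorph_nat rmorphB rmorphD.
Qed.

End Transfer.

Theorem proposition3p1 (K L : fieldType) (OK : {pred K}) (OL : {pred L})
  (iota : {rmorphism K -> L}) :
  henselian_valued_field OK -> henselian_valued_field OL ->
  [pchar K] =i pred0 -> [pchar L] =i pred0 ->
  (forall x : K, (x \in OK) = (iota x \in OL)) ->
  forall N : nat, (0 < N)%N -> LRV_substructure OK OL iota N.
Proof.
move=> [hOK _] [hOL _] _ _ iotaO N _; split.
- exact: rv_iota.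
- by move=> x y z; rewrite (rvmul_rv hOK) (rvmul_rv hOL) -rmorphM; apply: rv_iota.
- by move=> x y; rewrite (rvdiv_rv hOK) (rvdiv_rv hOL); apply: val_le_iota.
- exact: oplus_iota.
split=> [M NM x y|d x a]; last exact: Prel_iota.
by rewrite (rvNM_rv hOK) // (rvNM_rv hOL) //; apply: rv_iota.
Qed.
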